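(* Let $n\in\mathbb{N}$, $n\neq1$, and let $f\colon\mathbb{R}\to\mathbb{R}$ be an additive function. Define $\phi\colon\mathbb{R}\to\mathbb{R}$ by $\phi(x)=f(x^{n})-f(x)^{n}$. Assume that $\phi$ is locally regular on $\mathbb{R}$. Then $f$ is linear, i.e. $f(x)=f(1)x$ for all $x\in\mathbb{R}$.
   Context: $\mathbb{N}$ denotes the set of positive integers. A function $f\colon\mathbb{R}\to\mathbb{R}$ is additive if $f(x+y)=f(x)+f(y)$ for all $x,y\in\mathbb{R}$. A real function defined on a subset of $\mathbb{R}$ is called locally regular on its domain if at least one of the following holds: (i) it is bounded on a (Lebesgue) measurable subset of its domain of positive measure; (ii) it is continuous at some point of its domain; (iii) there is a subset of its domain of positive Lebesgue measure on which its restriction is Lebesgue measurable. *)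

From HB Require Import structures.
From mathcomp Require Import all_boot all_order all_algebra.
From mathcomp Require Import all_classical all_reals all_analysis.
Set Implicit Arguments. Unset Strict Implicit. Unset Printing Implicit Defensive.
Import Order.TTheory GRing.Theory Num.Theory.
Import numFieldNormedType.Exports.
Local Open Scope classical_set_scope.
Local Open Scope ring_scope.

(* The real line equipped with the sigma-algebra of Lebesgue measurable sets
   (the completion of the Borel sigma-algebra w.r.t. Lebesgue measure). *)
Definition LebR (R : realType) : Type :=
  caratheodory_type (lebesgue_stieltjes_measure (@idfun R))^*%mu.

Definition leb (R : realType) : set (LebR R) -> \bar R :=
  @completed_lebesgue_measure R.

Definition additive_fun (R : realType) (f : R -> R) : Prop :=
  forall x y, f (x + y) = f x + f y.

Definition locally_regular (R : realType) (phi : R -> R) : Prop :=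
  (exists D : set (LebR R), measurable D /\ (0 < leb D)%E /\
      exists M : R, forall x, D x -> `|phi x| <= M)
  \/ (exists x : R, {for x, continuous phi})
  \/ (exists D : set (LebR R), measurable D /\ (0 < leb D)%E /\
      measurable_fun D (phi : LebR R -> R)).

(* Write c := f 1 and phi x := f (x ^+ n) - f x ^+ n.  Local regularity makes phi
   bounded on a Borel set A of positive measure, and by the Lebesgue density theorem
   A contains the progressions y, y + u, ..., y + n u for all small u.  As
   j |-> phi (y + j u) is a polynomial of degree n in j with leading coefficient
   phi u, inverting a Vandermonde matrix bounds phi near 0, and the homogeneity
   phi (N x) = N ^ n phi x bounds it on every interval.  The same argument applied
   to j |-> phi (x + j), |x| < 1, bounds the coefficients of j ^ (n - 1) and
   j ^ (n - 2), which are n (1 - c ^ (n - 1)) f x and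
   'C(n, 2) (f (x ^+ 2) - c ^ (n - 2) f x ^+ 2).  If c ^ (n - 1) <> 1, f is bounded
   near 0, hence linear.  Otherwise c = 1 or c = -1, and g := c f is additive with
   g 1 = 1 and g (x ^+ 2) - g x ^+ 2 bounded near 0; this forces g (x ^+ 2) = g x ^+ 2,
   so g is monotone and therefore the identity. *)

From HB Require Import structures.
From mathcomp Require Import all_boot all_order all_algebra.
From mathcomp Require Import all_classical all_reals all_analysis.
From mathcomp Require Import measurable_realfun lebesgue_integral_differentiation.
From mathcomp Require Import ring lra zify.
Set Implicit Arguments. Unset Strict Implicit. Unset Printing Implicit Defensive.
Import Order.TTheory GRing.Theory Num.Theory.
Import numFieldNormedType.Exports.
Local Open Scope classical_set_scope.
Local Open Scope ring_scope.

Lemma vandermonde_coef_bound {K : numFieldType} (n : nat) :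
  exists C : 'I_n.+1 -> K, forall (b : 'I_n.+1 -> K) (M : K),
    (forall j : 'I_n.+1, `|\sum_(i < n.+1) b i * (j : nat)%:R ^+ i| <= M) ->
    forall i, `|b i| <= C i * M.
Proof.
pose V := Vandermonde n.+1 (\row_(j < n.+1) (j : nat)%:R : 'rV[K]_n.+1).
have uV : V \in unitmx.
  rewrite unitmxE unitfE det_Vandermonde; apply/prodf_neq0 => i _.
  by apply/prodf_neq0 => j ij; rewrite !mxE subr_eq0 eqr_nat gtn_eqF.
exists (fun i => \sum_(j < n.+1) `|invmx V j i|) => b M hb i.
pose B : 'rV[K]_n.+1 := \row_i b i.
have BV j : (B *m V) 0 j = \sum_(i < n.+1) b i * (j : nat)%:R ^+ i.
  by rewrite !mxE; apply: eq_bigr => k _; rewrite !mxE.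
have -> : b i = (B *m V *m invmx V) 0 i by rewrite mulmxK // mxE.
rewrite mxE (le_trans (ler_norm_sum _ _ _)) // mulr_suml; apply: ler_sum => j _.
by rewrite normrM BV mulrC ler_wpM2l.
Qed.

Section additive_real_functions.
Variable R : realType.
Implicit Types (F : {additive R -> R}) (x y w : R).

Lemma additive_funP (f : R -> R) :
  additive_fun f -> {F : {additive R -> R} | F =1 f}.
Proof.
move=> fD; have f0 : f 0 = 0.
  by apply: (@addrI _ (f 0)); rewrite -fD !addr0.
have fM : nmod_morphism f by split => // x y; exact: fD.
by exists (HB.pack_for {additive R -> R} f (GRing.isNmodMorphism.Build _ _ f fM)).
Qed.

Lemma eq0_of_natmul_bounded (a B : R) : (forall N : nat, N%:R * `|a| <= B) -> a = 0.
Proof.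
move=> hB; apply/eqP; apply: contraT => a0.
have na : 0 < `|a| by rewrite normr_gt0.
have B0 : 0 <= B by have := hB 0%N; rewrite mul0r.
have := hB (Num.Def.archi_bound (B / `|a|)); rewrite -ler_pdivlMr //.
by rewrite leNgt archi_boundP ?divr_ge0 // ltW.
Qed.

Lemma intr_frac_decomposition x :
  exists k : int, exists2 w : R, x = k%:~R + w & 0 <= w < 1.
Proof.
exists (Num.floor x), (x - (Num.floor x)%:~R); first by rewrite addrC subrK.
have /andP[h1 h2] := floor_itv x.
by rewrite subr_ge0 h1 ltrBlDl; rewrite intrD in h2.
Qed.

Lemma raddf_intrM F (k : int) y : F (k%:~R * y) = k%:~R * F y.
Proof. by rewrite !mulrzl raddfMz. Qed.

Lemma raddf_intr F (k : int) : F k%:~R = k%:~R * F 1.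
Proof. by rewrite -raddf_intrM mulr1. Qed.

(* [N * (F x - F 1 * x) = F w - F 1 * w] for the fractional part [w] of [N * x]. *)
Lemma additive_bounded_linear F (M : R) :
  (forall x, `|x| < 1 -> `|F x| <= M) -> forall x, F x = F 1 * x.
Proof.
move=> FM x; apply/eqP; rewrite -subr_eq0; apply/eqP.
apply: (@eq0_of_natmul_bounded _ (M + `|F 1|)) => N.
have [k [w NxE /andP[w0 w1]]] := intr_frac_decomposition (x *+ N).
have e : N%:R * (F x - F 1 * x) = F w - F 1 * w.
  have := congr1 F NxE; rewrite raddfMn raddfD raddf_intr => FNx.
  by rewrite mulrBr !mulr_natl -mulrnAr FNx NxE; ring.
have w_lt1 : `|w| < 1 by rewrite ger0_norm.
rewrite -[N%:R]ger0_norm // -normrM e (le_trans (ler_normB _ _)) // lerD ?FM //.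
by rewrite normrM ler_piMr // ltW.
Qed.

Lemma additive_nonneg_id F :
  F 1 = 1 -> (forall t, 0 <= t -> 0 <= F t) -> forall x, F x = x.
Proof.
move=> F1 Fge0 x; apply/eqP; rewrite -subr_eq0; apply/eqP.
apply: (@eq0_of_natmul_bounded _ 1) => N.
have [k [w NxE /andP[w0 w1]]] := intr_frac_decomposition (x *+ N).
have e : N%:R * (F x - x) = F w - w.
  by rewrite mulrBr !mulr_natl -raddfMn NxE raddfD raddf_intr F1; ring.
have Fw0 := Fge0 _ w0.
have Fw1 : F w <= 1 by rewrite -F1 -subr_ge0 -raddfB Fge0 // subr_ge0 ltW.
rewrite -[N%:R]ger0_norm // -normrM e ler_norml; apply/andP; split; lra.
Qed.

Definition pow_defect (f : R -> R) (n : nat) x := f (x ^+ n) - f x ^+ n.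

Lemma pow_defect_natmul F n x (N : nat) :
  pow_defect F n (x *+ N) = pow_defect F n x *+ (N ^ n).
Proof. by rewrite /pow_defect exprMn_n !raddfMn exprMn_n mulrnBl. Qed.

Lemma additive_sqr_bounded_multiplicative F (M : R) : F 1 = 1 ->
  (forall x, `|x| < 1 -> `|pow_defect F 2 x| <= M) -> forall x, pow_defect F 2 x = 0.
Proof.
move=> F1 FM x.
have defect_intrD (k : int) w : pow_defect F 2 (k%:~R + w) = pow_defect F 2 w.
  rewrite /pow_defect.
  have -> : (k%:~R + w) ^+ 2 = k%:~R * (k%:~R + w *+ 2) + w ^+ 2 by ring.
  by rewrite !raddfD raddf_intrM raddfD raddfMn !raddf_intr F1; ring.
apply: (@eq0_of_natmul_bounded _ M) => N.
have [k [w NxE /andP[w0 w1]]] := intr_frac_decomposition (x *+ N).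
apply: le_trans (FM w _); last by rewrite ger0_norm.
rewrite -(defect_intrD k w) -NxE pow_defect_natmul mulr_natl normrMn.
by apply: ler_wpMn2l => //; nia.
Qed.

Lemma additive_sqr_bounded_id F (M : R) : F 1 = 1 ->
  (forall x, `|x| < 1 -> `|pow_defect F 2 x| <= M) -> forall x, F x = x.
Proof.
move=> F1 FM; apply: additive_nonneg_id => // t t0.
have /eqP := additive_sqr_bounded_multiplicative F1 FM (Num.sqrt t).
by rewrite /pow_defect sqr_sqrtr // subr_eq0 => /eqP ->; exact: sqr_ge0.
Qed.

End additive_real_functions.

Section lebesgue_measurable_sets.
Variable R : realType.
Local Open Scope ereal_scope.
Local Notation mu := (@lebesgue_measure R).

Lemma lebesgue_stieltjes_idfun_outerE :
  (lebesgue_stieltjes_measure (@idfun R))^*%mu = (@wlength R idfun)^*%mu.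
Proof.
apply/funext => X; apply/eqP; rewrite eq_le; apply/andP; split.
- apply: le_ereal_inf_tmp => _ [A [mA XA] <-].
  have -> : \sum_(k <oo) wlength idfun (A k) =
      \sum_(k <oo) lebesgue_stieltjes_measure idfun (A k).
    apply: eq_eseriesr => k _.
    by rewrite /lebesgue_stieltjes_measure /measure_extension measurable_mu_extE.
  apply: ereal_inf_lbound; exists A => //; split => // k.
  exact: sub_sigma_algebra.
- apply: le_ereal_inf_tmp => _ [A [mA XA] <-].
  apply: (@le_trans _ _ ((wlength idfun)^*%mu (\bigcup_k A k))).
    exact: le_outer_measure.
  exact: outer_measure_sigma_subadditive.
Qed.

Lemma LebR_measurableE (D : set R) :
  measurable (D : set (LebR R)) = (wlength idfun)^*%mu.-cara.-measurable D.
Proof. by rewrite /measurable /= lebesgue_stieltjes_idfun_outerE. Qed.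

Lemma lebE (D : set R) : leb (D : set (LebR R)) = (wlength idfun)^*%mu D.
Proof. by []. Qed.

Lemma completed_measurable_borel_sub (D : set (LebR R)) :
  measurable D -> 0 < leb D ->
  exists A : set R, [/\ measurable A, A `<=` D & 0 < mu A].
Proof.
rewrite LebR_measurableE -completed_caratheodory_measurable.
rewrite g_sigma_completed_algebra_genE => -[A mA [N /negligible_outer_measure N0 ANE]] D0.
exists A; split => //; first by rewrite -ANE => x Ax; left.
move: D0; rewrite lebE -ANE => /lt_le_trans; apply.
by rewrite /= (le_trans (outer_measureU2 _ _ _)) //= N0 adde0.
Qed.

Lemma measurable_fun_bounded_on_pos_measure (D : set (LebR R)) (phi : LebR R -> R) :
  measurable D -> 0 < leb D -> measurable_fun D phi ->
  exists D' : set (LebR R), [/\ measurable D', 0 < leb D' &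
    exists M : R, forall x, D' x -> (`|phi x| <= M)%R].
Proof.
move=> mD D0 mphi.
pose Dk (k : nat) := D `&` phi @^-1` `[(- k%:R)%R, k%:R].
suff [k Dk0] : exists k, 0 < leb (Dk k).
  exists (Dk k); split => //; first by apply: mphi => //; exact: measurable_itv.
  by exists k%:R => x [_ /=]; rewrite in_itv /= -ler_norml.
apply: contrapT => /forallNP Dk0; move: D0; apply/negP; rewrite -leNgt.
have DU : (D : set R) `<=` \bigcup_k (Dk k : set R).
  move=> x Dx; exists (Num.Def.archi_bound `|phi x|) => //; split => //=.
  by rewrite in_itv /= -ler_norml ltW // archi_boundP.
rewrite lebE; apply: (@le_trans _ _ ((wlength idfun)^*%mu (\bigcup_k Dk k))).
  exact: le_outer_measure.
apply: (le_trans (outer_measure_sigma_subadditive _ _)).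
rewrite eseries0 // => k _ _.
by apply/eqP; rewrite eq_le outer_measure_ge0 andbT leNgt; apply/negP/Dk0.
Qed.

Lemma locally_regular_bounded_on_pos_measure (phi : R -> R) :
  locally_regular phi ->
  exists A : set R, [/\ measurable A, 0 < mu A &
    exists M : R, forall x, A x -> (`|phi x| <= M)%R].
Proof.
have bounded_sub (D : set (LebR R)) (M : R) : measurable D -> 0 < leb D ->
    (forall x, D x -> (`|phi x| <= M)%R) ->
    exists A : set R, [/\ measurable A, 0 < mu A &
      exists M : R, forall x, A x -> (`|phi x| <= M)%R].
  move=> mD D0 DM; have [A [mA AD A0]] := completed_measurable_borel_sub mD D0.
  by exists A; split => //; exists M => x /AD /DM.
case=> [[D [mD [D0 [M DM]]]]|[[x0 phi_x0]|[D [mD [D0 mphi]]]]].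
- exact: bounded_sub DM.
- have /nbhs_ballP[r /= r0 hr] := phi_x0 _ (nbhsx_ballx (phi x0) 1 ltr01).
  exists (ball x0 r); split; first exact: measurable_ball.
    by rewrite lebesgue_measure_ball ?ltW // lte_fin mulrn_wgt0.
  exists (`|phi x0| + 1)%R => y /hr /ltW; rewrite /ball /= => hy.
  rewrite -(subKr (phi x0) (phi y)); apply: (le_trans (ler_normB _ _)).
  by rewrite lerD2l.
- have [D' [mD' D'0 [M D'M]]] := measurable_fun_bounded_on_pos_measure mD D0 mphi.
  exact: bounded_sub D'M.
Qed.

End lebesgue_measurable_sets.

Section lebesgue_density_progressions.
Variable R : realType.
Local Notation mu := (@lebesgue_measure R).

Lemma exists_density_point (A : set R) : measurable A -> (0 < mu A)%E ->
  exists2 x0, A x0 &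
    (mu (A `&` ball x0 r) * (mu (ball x0 r))^-1)%E @[r --> 0^'+] --> 1%:E.
Proof.
move=> mA A0; have [N [mN N0 densN]] := lebesgue_density mA.
apply: contrapT => /forall2NP nodens.
suff AN : A `<=` N.
  have := lt_le_trans A0 (le_measure mu (mem_set mA) (mem_set mN) AN).
  by rewrite lt_def => /andP[/eqP NN0 _]; apply: NN0; exact: N0.
move=> x Ax; apply: densN => /= dens; have [//|] := nodens x.
by move: dens; rewrite indicE mem_set.
Qed.

Lemma lebesgue_density_ball (A : set R) : measurable A -> (0 < mu A)%E ->
  forall e : R, 0 < e ->
  exists x0 r, 0 < r /\ (mu (ball x0 r `\` A) < (e * (r *+ 2))%:E)%E.
Proof.
move=> mA A0 e e0; have [x0 _ dens] := exists_density_point mA A0.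
have [r [r0 Hr]] : exists r, 0 < r /\
    ((1 - e)%:E < mu (A `&` ball x0 r) * (mu (ball x0 r))^-1)%E.
  have e1 : ((1 - e)%:E < 1%:E)%E by rewrite lte_fin ltrBlDr ltrDl.
  apply: (@filter_ex _ 0^'+) => //; near=> r; split.
    by near: r; exact: nbhs_right_gt.
  by near: r; exact: dens _ (open_ereal_gt' e1).
exists x0, r; split => //.
have mB := measurable_ball x0 r.
have muB : mu (ball x0 r) = (r *+ 2)%:E by rewrite lebesgue_measure_ball // ltW.
have r2 : 0 < r *+ 2 by rewrite mulrn_wgt0.
have [a aE] : exists a, mu (A `&` ball x0 r) = a%:E.
  have : mu (A `&` ball x0 r) \is a fin_num.
    rewrite ge0_fin_numE ?measure_ge0 // (@le_lt_trans _ _ (mu (ball x0 r))) //.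
      by apply: le_measure; rewrite ?inE //; exact: measurableI.
    by rewrite muB ltry.
  by move/fineK/esym; exists (fine (mu (A `&` ball x0 r))).
move: Hr; rewrite muB aE inver gt_eqF // -EFinM lte_fin ltr_pdivlMr // => Hr.
rewrite measureD //= ?muB ?ltry // setIC aE -EFinB lte_fin.
by move: Hr; rewrite mulrBl mul1r; lra.
Unshelve. all: by end_near. Qed.

Lemma lebesgue_measure_shift (t : R) (A : set R) : measurable A ->
  mu ((fun x => x + t) @^-1` A) = mu A.
Proof.
move=> mA; rewrite -[LHS]/(pushforward mu ((fun x => x + t) : _ -> measurableTypeR R) A).
apply/esym/lebesgue_measure_unique => //=; first exact: measurable_funD.
move=> _ _ [[a b] _ <-]; rewrite /pushforward.
have -> : (fun x => x + t) @^-1` `]a, b]%classic = `]a - t, b - t]%classic.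
  by apply/seteqP; split => x /=; rewrite !in_itv /= ltrBlDr lerBrDr.
rewrite !lebesgue_measure_itv /= !lte_fin ltrBlDr subrK.
by case: ifP => // _; rewrite -!EFinD; congr EFin; ring.
Qed.

Lemma measure_shift_ballD_le (A : set R) (x0 r t : R) : measurable A -> 0 < r ->
  (mu ((fun y => y + t)%R @^-1` (ball (x0 + t)%R r `\` A)) <=
    (`|t| *+ 2)%:E + mu (ball x0 r `\` A))%E.
Proof.
move=> mA r0; have mB0 := measurable_ball x0 r; have mB1 := measurable_ball x0 (r + `|t|).
have mBD (c s : R) (B : set R) : measurable B -> measurable (ball c s `\` B).
  by move=> mB; apply: measurableD => //; exact: measurable_ball.
rewrite lebesgue_measure_shift; last exact: mBD.
have sub_ring : ball (x0 + t) r `\` A `<=`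
    (ball x0 (r + `|t|) `\` ball x0 r) `|` (ball x0 r `\` A).
  move=> z [/= z_near nAz]; have [|] := pselect (ball x0 r z); [right|left] => //.
  split => //; move: z_near; rewrite /ball /= (_ : x0 - z = x0 + t - z - t); last by ring.
  by move=> z_near; rewrite (le_lt_trans (ler_normB _ _)) // ltrD2r.
apply: (@le_trans _ _ (mu ((ball x0 (r + `|t|) `\` ball x0 r) `|` (ball x0 r `\` A)))).
  apply: le_measure => //; rewrite inE; first exact: mBD.
  by apply: measurableU; exact: mBD.
apply: (le_trans (measureU2 _ _ _)); [exact: mBD|exact: mBD|].
rewrite leeD2r // measureD //=; last by rewrite lebesgue_measure_ball ?ltry // addr_ge0 // ltW.
rewrite setIidr; last by apply: le_ball; rewrite lerDl.
have rt0 : 0 <= r + `|t| by rewrite addr_ge0 // ltW.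
rewrite (lebesgue_measure_ball _ (ltW r0)) (lebesgue_measure_ball _ rt0) -EFinB lee_fin.
by rewrite mulrnDl addrAC subrr add0r.
Qed.

(* Take a ball B of length L with |B \ A| < L / (2 (m + 1)).  If no progression of
   step u starts in B, then B is covered by the m + 1 sets of those y with
   y + j u in (B + j u) \ A, each of measure at most 2 m |u| + L / (2 (m + 1));
   this is impossible once |u| < L / (4 (m + 1) ^ 2). *)
Lemma arithmetic_progression_in_pos_measure (A : set R) (m : nat) :
  measurable A -> (0 < mu A)%E ->
  exists2 d : R, 0 < d & forall u : R, `|u| < d ->
    exists y : R, forall j : nat, (j <= m)%N -> A (y + j%:R * u).
Proof.
move=> mA A0; pose k : R := m.+1%:R; pose e := (k * 2)^-1.
have k0 : 0 < k by rewrite ltr0n.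
have [x0 [r [r0 Bx0A]]] : exists x0 r, 0 < r /\ (mu (ball x0 r `\` A) < (e * (r *+ 2))%:E)%E.
  by apply: lebesgue_density_ball => //; rewrite invr_gt0 mulr_gt0.
pose L := r *+ 2; have L0 : 0 < L by rewrite mulrn_wgt0.
exists (L / (4 * k ^+ 2)) => [|u u_small]; first by rewrite divr_gt0 // mulr_gt0 // exprn_gt0.
apply: contrapT => /forallNP noprog.
pose Bad (j : nat) := (fun y => y + j%:R * u) @^-1` (ball (x0 + j%:R * u) r `\` A).
have mBad j : measurable (Bad j).
  rewrite -[Bad j]setTI; apply: (measurable_funD (@measurable_id _ _ setT) (measurable_cst _)) => //.
  by apply: measurableD => //; exact: measurable_ball.
have cover : ball x0 r `<=` \big[setU/set0]_(j < m.+1) Bad j.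
  move=> y By; have /existsNP[j /not_implyP[jm nA]] := noprog y.
  rewrite -bigcup_mkord; exists j => //; split => //.
  by move: By; rewrite /ball /= opprD addrACA subrr addr0.
have Bad_le j : (j < m.+1)%N -> (mu (Bad j) <= (m%:R * `|u| *+ 2 + e * L)%:E)%E.
  move=> jm; have := measure_shift_ballD_le x0 (j%:R * u) mA r0.
  move/le_trans; apply; rewrite [leRHS]EFinD; apply: leeD; last exact: ltW Bx0A.
  by rewrite lee_fin lerMn2r /= normrM normr_nat ler_wpM2r // ler_nat -ltnS.
have : (mu (ball x0 r) <= ((m%:R * `|u| *+ 2 + e * L) *+ m.+1)%:E)%E.
  apply: (@le_trans _ _ (mu (\big[setU/set0]_(j < m.+1) Bad j))).
    apply: le_measure => //; rewrite inE; first exact: measurable_ball.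
    by apply: bigsetU_measurable => j _; exact: mBad.
  apply: (@le_trans _ _ (\sum_(j < m.+1) mu (Bad j))%E).
    by apply: Boole_inequality => j _; exact: mBad.
  have -> : ((m%:R * `|u| *+ 2 + e * L) *+ m.+1)%:E =
      (\sum_(j < m.+1) (m%:R * `|u| *+ 2 + e * L)%:E)%E.
    by rewrite sumEFin sumr_const card_ord.
  by apply: lee_sum => j _; exact: Bad_le (ltn_ord j).
rewrite lebesgue_measure_ball ?(ltW r0) // lee_fin -/L -mulr_natr -/k => L_le.
have eLk : e * L * k = L / 2 by rewrite /e; field; rewrite gt_eqF.
have mk : m%:R <= k by rewrite ler_nat.
have := u_small; rewrite ltr_pdivlMr ?mulr_gt0 ?exprn_gt0 // => uk.
have := normr_ge0 u; nra.
Qed.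

End lebesgue_density_progressions.

Definition defect_coef {R : realType} (f : R -> R) (n : nat) (y u : R) (i : nat) :=
  'C(n, i)%:R * (f (y ^+ (n - i) * u ^+ i) - f y ^+ (n - i) * f u ^+ i).

Section power_defect.
Variables (R : realType) (F : {additive R -> R}) (n : nat).
Local Notation phi := (pow_defect F n).
Local Notation coef := (defect_coef F n).

Lemma pow_defect_progression (y u : R) (j : nat) :
  phi (y + j%:R * u) = \sum_(i < n.+1) coef y u i * j%:R ^+ i.
Proof.
rewrite /pow_defect raddfD [j%:R * u]mulr_natl raddfMn !exprDn raddf_sum -sumrB.
apply: eq_bigr => i _; rewrite !exprMn_n !mulrnAr !raddfMn expr1n mulr1.
by rewrite -!mulrnDl mulrnAC /defect_coef mulr_natl.
Qed.

Lemma defect_coef_top (y u : R) : coef y u n = phi u.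
Proof. by rewrite /defect_coef subnn !expr0 !mul1r binn mul1r. Qed.

Lemma pow_defect_bounded_near0 (A : set R) (M : R) :
  measurable A -> (0 < lebesgue_measure A)%E -> (forall x, A x -> `|phi x| <= M) ->
  exists2 d : R, 0 < d & exists K : R, forall u, `|u| < d -> `|phi u| <= K.
Proof.
move=> mA A0 AM; have [d d0 prog] := arithmetic_progression_in_pos_measure n mA A0.
have [C coefC] := @vandermonde_coef_bound R n.
exists d => //; exists (C ord_max * M) => u /prog[y yA].
rewrite -(defect_coef_top y); apply: (coefC (fun i : 'I_n.+1 => coef y u i) M _ ord_max) => j.
by rewrite -pow_defect_progression; apply/AM/yA; rewrite -ltnS.
Qed.

Lemma pow_defect_bounded_ball :
  (exists2 d : R, 0 < d & exists K : R, forall u, `|u| < d -> `|phi u| <= K) ->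
  forall r : R, exists M : R, forall z, `|z| < r -> `|phi z| <= M.
Proof.
move=> [d d0 [K dK]] r; pose N := (Num.Def.archi_bound (`|r| / d)).+1.
have N0 : 0 < N%:R :> R by rewrite ltr0n.
exists (K *+ (N ^ n)) => z zr.
rewrite -(divfK (lt0r_neq0 N0) z) mulr_natr pow_defect_natmul normrMn ler_wMn2r //.
apply: dK; rewrite normrM normfV (gtr0_norm N0) ltr_pdivrMr //.
apply: (lt_le_trans zr); rewrite (le_trans (ler_norm r)) // mulrC -ler_pdivrMr //.
apply/ltW/(lt_le_trans (archi_boundP _)); first by rewrite divr_ge0 // ltW.
by rewrite ler_nat.
Qed.

Lemma defect_coef_bounded :
  (forall r : R, exists M : R, forall z, `|z| < r -> `|phi z| <= M) ->
  forall i, (i < n.+1)%N -> exists M : R, forall x, `|x| < 1 -> `|coef x 1 i| <= M.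
Proof.
move=> phiB i ni; have [M phiM] := phiB n.+1%:R.
have [C coefC] := @vandermonde_coef_bound R n.
exists (C (Ordinal ni) * M) => x x1.
apply: (coefC (fun i : 'I_n.+1 => coef x 1 i) M _ (Ordinal ni)) => j.
rewrite -pow_defect_progression mulr1 phiM // (le_lt_trans (ler_normD _ _)) //.
by rewrite -natr1 addrC normr_nat; apply: ler_ltD => //; rewrite ler_nat -ltnS.
Qed.

End power_defect.

Section linearity_from_defect_coefs.
Variables (R : realType) (F : {additive R -> R}) (m : nat).
Local Notation c := (F 1).

Lemma linear_of_bounded_defect_coef1 (M : R) : c ^+ m.+1 != 1 ->
  (forall x, `|x| < 1 -> `|defect_coef F m.+2 x 1 m.+1| <= M) ->
  forall x, F x = c * x.
Proof.
move=> c1 coefM; have Cpos : 0 < 'C(m.+2, m.+1)%:R :> R by rewrite ltr0n bin_gt0.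
have c1pos : 0 < `|1 - c ^+ m.+1| by rewrite normr_gt0 subr_eq0 eq_sym.
apply: (additive_bounded_linear (M := M / ('C(m.+2, m.+1)%:R * `|1 - c ^+ m.+1|))).
move=> x /coefM; rewrite /defect_coef subSnn !expr1 expr1n mulr1.
rewrite (_ : F x - F x * c ^+ m.+1 = (1 - c ^+ m.+1) * F x); last by ring.
by rewrite !normrM normr_nat mulrA ler_pdivlMr ?mulr_gt0 // mulrC.
Qed.

(* When [c ^+ m.+1 = 1] we have [c = 1] or [c = -1], so that [G := c * F] satisfies
   [G 1 = 1] and [pow_defect G 2 = c * (F (x ^+ 2) - F x ^+ 2 * c ^+ m)]. *)
Lemma linear_of_bounded_defect_coef2 (M : R) : c ^+ m.+1 = 1 ->
  (forall x, `|x| < 1 -> `|defect_coef F m.+2 x 1 m| <= M) ->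
  forall x, F x = c * x.
Proof.
move=> c1 coefM.
have Cpos : 0 < 'C(m.+2, m)%:R :> R by rewrite ltr0n bin_gt0 leqW.
have nc : `|c| = 1 by apply/eqP; rewrite -(pexpr_eq1 (ltn0Sn m)) // -normrX c1 normr1.
have cc : c * c = 1 by rewrite -expr2 -real_normK ?num_real // nc expr1n.
have cm : c ^+ m = c by rewrite -[c ^+ m]mulr1 -[X in _ * X]cc mulrA -exprSr c1 mul1r.
have [G GE] : {G : {additive R -> R} | G =1 fun x => c * F x}.
  by apply: additive_funP => x y; rewrite raddfD mulrDr.
have G1 : G 1 = 1 by rewrite GE.
suff Gid : forall x, G x = x by move=> x; rewrite -[F x]mul1r -[X in X * F x]cc -mulrA -GE Gid.
apply: (additive_sqr_bounded_id (M := M / 'C(m.+2, m)%:R) G1) => x /coefM.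
rewrite /defect_coef (_ : (m.+2 - m)%N = 2%N); last by rewrite -addn2 addKn.
rewrite expr1n mulr1 normrM normr_nat mulrC -ler_pdivlMr // /pow_defect !GE.
suff -> : c * F (x ^+ 2) - (c * F x) ^+ 2 = c * (F (x ^+ 2) - F x ^+ 2 * c ^+ m).
  by rewrite normrM nc mul1r.
by rewrite cm; transitivity (c * F (x ^+ 2) - F x ^+ 2 * (c * c)); ring.
Qed.

End linearity_from_defect_coefs.

Theorem mainTheorem6 (R : realType) (n : nat) (f : R -> R) :
  (0 < n)%N -> n <> 1%N ->
  additive_fun f ->
  locally_regular (fun x : R => f (x ^+ n) - f x ^+ n) ->
  forall x : R, f x = f 1 * x.
Proof.
move=> n0 n1; have [m ->] : exists m, n = m.+2 by case: n n0 n1 => [|[|m]] // _ _; exists m.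
move=> fD; have [F FE] := additive_funP fD.
have -> : f = F by apply/funext => x; rewrite FE.
move=> /locally_regular_bounded_on_pos_measure[A [mA A0 [M AM]]].
have /pow_defect_bounded_ball/defect_coef_bounded coefB :=
  pow_defect_bounded_near0 mA A0 AM.
have [c1|c1] := eqVneq (F 1 ^+ m.+1) 1.
- have [M2 coefM] := coefB m (leqW (leqW (ltnSn m))).
  exact: linear_of_bounded_defect_coef2 c1 coefM.
- have [M1 coefM] := coefB m.+1 (leqW (ltnSn m.+1)).
  exact: linear_of_bounded_defect_coef1 c1 coefM.
Qed.
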